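(* Let $m,n\ge 3$ be integers. The direct product $C_m\times C_n$ is a distance magic graph if and only if $n=4$, or $m=4$, or $m\equiv n\equiv 0\pmod 4$. Moreover, $C_m\times C_n$ is a balanced distance magic graph if and only if $n=4$ or $m=4$.
   Context: All graphs are finite and simple; $C_n$ denotes the cycle on $n$ vertices. For a graph $G$ and vertex $x$, $N(x)$ is the (open) neighborhood of $x$. A distance magic labeling of a graph $G$ of order $N$ is a bijection $\ell\colon V(G)\to\{1,\dots,N\}$ for which there is a constant $k$ such that $\sum_{y\in N(x)}\ell(y)=k$ for every $x\in V(G)$; $G$ is distance magic if it admits such a labeling. A balanced distance magic labeling of a graph with an even number $N$ of vertices is a distance magic labeling $\ell$ such that for every vertex $w$: whenever $u\in N(w)$ has $\ell(u)=i$, there is $v\in N(w)$ with $\ell(v)=N+1-i$; a graph is balanced distance magic if it has an even number of vertices and admits such a labeling. The direct product $G\times H$ has vertex set $V(G)\times V(H)$, with $(g,h)$ adjacent to $(g',h')$ iff $gg'\in E(G)$ and $hh'\in E(H)$. *)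

From mathcomp Require Import all_boot.
Set Implicit Arguments. Unset Strict Implicit. Unset Printing Implicit Defensive.

(* A graph is a vertex finType T with an adjacency relation e (symmetric,
   irreflexive for the graphs considered here). *)

(* The cycle C_n on vertex set 'I_n: i ~ j iff j = i+1 mod n or i = j+1 mod n.
   For n >= 3 this is the simple n-cycle. *)
Definition cycle_adj (n : nat) : rel 'I_n :=
  fun i j => (j == (i.+1 %% n) :> nat) || (i == (j.+1 %% n) :> nat).

Definition direct_prod (T1 T2 : finType) (e1 : rel T1) (e2 : rel T2)
  : rel (T1 * T2) :=
  fun x y => e1 x.1 y.1 && e2 x.2 y.2.

(* A distance magic labeling: a bijection l : V -> {1,...,N}, where N = #|V|,
   represented as a bijection l : V -> 'I_N with label (l x).+1, such that
   the sum of labels over the open neighbourhood is a constant k. *)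
Definition label (T : finType) (l : T -> 'I_#|T|) (x : T) : nat := (l x).+1.

Definition is_distance_magic_labeling (T : finType) (e : rel T)
  (l : T -> 'I_#|T|) : Prop :=
  bijective l /\
  exists k : nat, forall x : T, \sum_(y | e x y) label l y = k.

Definition distance_magic (T : finType) (e : rel T) : Prop :=
  exists l : T -> 'I_#|T|, is_distance_magic_labeling e l.

Definition is_balanced_distance_magic_labeling (T : finType) (e : rel T)
  (l : T -> 'I_#|T|) : Prop :=
  is_distance_magic_labeling e l /\
  forall w u : T, e w u ->
    exists v : T, e w v /\ label l v = #|T|.+1 - label l u.

Definition balanced_distance_magic (T : finType) (e : rel T) : Prop :=
  ~~ odd #|T| /\ exists l : T -> 'I_#|T|, is_balanced_distance_magic_labeling e l.

From mathcomp Require Import all_boot zify.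
Set Implicit Arguments. Unset Strict Implicit. Unset Printing Implicit Defensive.

(* Shifting labels to 0..mn-1, a distance magic
   labeling is the same thing as a "magic table": an injective
   L : 'I_m -> 'I_n -> nat with values below mn whose neighbourhood sums
   L(i-1,j-1) + L(i-1,j+1) + L(i+1,j-1) + L(i+1,j+1) are all equal.  Fix a column b and let G a := L(a,b-1) + L(a,b+1).  The magic
   condition at (a+1, b) reads G a + G (a+2) = k, so G is 4-periodic; if
   4 does not divide m, a multiple of 4 is 2 mod m, so G is 2-periodic and
   therefore constant (= k/2).  Comparing the columns b+1 and b+3 then gives
   L(a,b) = L(a,b+4), hence n = 4; symmetrically 4 not dividing n forces m = 4.
   Sufficiency.  Explicit magic tables: one for C_p x C_4 (all its row sums
   L(a,b-1) + L(a,b+1) are equal) and its transpose, and, when 4 | m and 4 | n,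
   a table assembled from 4 x 4 tiles.  Suppose m, n <> 4.  The complementary partners of (a, b) seen
   from (a+1, b+1) and from (a-1, b-1) have the same label, so they coincide
   in a common neighbour of both, which can only be (a, b) itself; then
   2 label(a,b) = N + 1 with N even, which is absurd.  Conversely the C_p x C_4
   table pairs column b with column b+2, which has the same neighbours. *)

Lemma cycle_adjE m (a b : 'I_m) :
  cycle_adj a b = (b == ordS a) || (b == ord_pred a).
Proof.
rewrite /cycle_adj; congr orb.
apply/eqP/eqP => [e|->]; last by rewrite -[X in val X](@ord_predK m a).
by apply: (@ordS_inj m); rewrite ord_predK; apply: val_inj.
Qed.

Lemma val_iter_ordS m (x : 'I_m) t : val (iter t (@ordS m) x) = (x + t) %% m.
Proof.
elim: t => [|t IH] /=; first by rewrite addn0 modn_small.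
by rewrite IH -addn1 modnDml -addnA addn1 addnS.
Qed.

Lemma iter_ordS_fixed m (a : 'I_m) t : iter t (@ordS m) a = a -> m %| t.
Proof.
move=> /(congr1 val); rewrite val_iter_ordS => h.
have : a + t == a + 0 %[mod m] by rewrite h addn0 modn_small.
by rewrite eqn_modDl mod0n.
Qed.

Lemma cycle_four_step m (a : 'I_m) : 3 <= m -> iter 4 (@ordS m) a = a -> m = 4.
Proof.
move=> hm /iter_ordS_fixed hd; have := dvdn_leq (isT : 0 < 4) hd.
by case: m hm hd {a} => [|[|[|[|[|m]]]]].
Qed.

Lemma ordS_neq_pred m (a : 'I_m) : 3 <= m -> ordS a != ord_pred a.
Proof.
move=> hm; apply/eqP => e.
have : iter 2 (@ordS m) a = a by rewrite /= e ord_predK.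
by move/iter_ordS_fixed/(dvdn_leq (isT : 0 < 2)); lia.
Qed.

Lemma cycle_nbr_sum m (F : 'I_m -> nat) (a : 'I_m) : 3 <= m ->
  \sum_(b | cycle_adj a b) F b = F (ord_pred a) + F (ordS a).
Proof.
move=> hm; have hne := ordS_neq_pred a hm.
rewrite (bigD1 (ordS a)) /=; last by rewrite cycle_adjE eqxx.
rewrite (bigD1 (ord_pred a)) /=; last by rewrite cycle_adjE eqxx orbT eq_sym.
rewrite big_pred0; first by rewrite addn0 addnC.
by move=> i; rewrite cycle_adjE; case: (i =P ordS a) => //= _; case: (i =P ord_pred a).
Qed.

Lemma cycle_common_nbr m (a c : 'I_m) : 3 <= m -> m <> 4 ->
  cycle_adj (ordS a) c -> cycle_adj (ord_pred a) c -> c = a.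
Proof.
move=> hm hm4; rewrite !cycle_adjE ordSK ord_predK.
case/orP => /eqP h1 //; case/orP => /eqP h2 //.
case: hm4; apply: (cycle_four_step (a := a)) => //=.
by rewrite -h1 h2 !ord_predK.
Qed.

Definition row_pair_sum m n (L : 'I_m -> 'I_n -> nat) (a : 'I_m) (b : 'I_n) : nat :=
  L a (ord_pred b) + L a (ordS b).

Definition nbr_sum m n (L : 'I_m -> 'I_n -> nat) (i : 'I_m) (j : 'I_n) : nat :=
  row_pair_sum L (ord_pred i) j + row_pair_sum L (ordS i) j.

Lemma nbr_sum_transpose m n (L : 'I_m -> 'I_n -> nat) i j :
  nbr_sum (fun b a => L a b) j i = nbr_sum L i j.
Proof. rewrite /nbr_sum /row_pair_sum; lia. Qed.

Notation cycle_prod m n := (direct_prod (@cycle_adj m) (@cycle_adj n)).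

Lemma cycle_prod_nbr_sum m n (F : 'I_m * 'I_n -> nat) (x : 'I_m * 'I_n) :
  3 <= m -> 3 <= n ->
  \sum_(y | cycle_prod m n x y) F y = nbr_sum (fun a b => F (a, b)) x.1 x.2.
Proof.
move=> hm hn.
transitivity (\sum_(y | cycle_adj x.1 y.1 && cycle_adj x.2 y.2)
                 (fun a b => F (a, b)) y.1 y.2); first by apply: eq_bigr => -[].
by rewrite -(pair_big _ _ (fun a b => F (a, b))) /= !cycle_nbr_sum.
Qed.

Definition table_injective m n (L : 'I_m -> 'I_n -> nat) : Prop :=
  forall a b a' b', L a b = L a' b' -> a = a' /\ b = b'.

(* A labeling of C_m x C_n by 0..mn-1, written as a table, that is distance
   magic with (shifted) magic constant k. *)
Definition magic_table m n (L : 'I_m -> 'I_n -> nat) (k : nat) : Prop :=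
  [/\ forall a b, L a b < m * n, table_injective L & forall i j, nbr_sum L i j = k].

Lemma magic_table_transpose m n (L : 'I_m -> 'I_n -> nat) k :
  magic_table L k -> magic_table (fun b a => L a b) k.
Proof.
case=> hlt hinj hsum; split.
- by move=> b a; rewrite mulnC.
- by move=> b a b' a' /hinj [-> ->].
- by move=> j i; rewrite nbr_sum_transpose.
Qed.

Lemma card_cycle_prod m n : #|{: 'I_m * 'I_n}| = m * n.
Proof. by rewrite card_prod !card_ord. Qed.

Lemma table_labeling m n (L : 'I_m -> 'I_n -> nat) k :
  3 <= m -> 3 <= n -> magic_table L k ->
  exists l, is_distance_magic_labeling (cycle_prod m n) l /\
            forall x, val (l x) = L x.1 x.2.
Proof.
move=> hm hn [hlt hinj hsum].
have hltT (x : 'I_m * 'I_n) : L x.1 x.2 < #|{: 'I_m * 'I_n}| by rewrite card_cycle_prod.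
exists (fun x => Ordinal (hltT x)); split => //; split.
- apply: inj_card_bij; last by rewrite card_ord.
  by move=> [a b] [a' b'] /(congr1 val) /= /hinj [-> ->].
- exists (k + 4) => -[a b]; rewrite cycle_prod_nbr_sum //= -(hsum a b).
  by rewrite /nbr_sum /row_pair_sum /label /=; lia.
Qed.

Lemma distance_magic_table m n : 3 <= m -> 3 <= n ->
  distance_magic (cycle_prod m n) <-> exists L k, @magic_table m n L k.
Proof.
move=> hm hn; split => [[l [hb [k hk]]] | [L [k /(table_labeling hm hn) [l [hl _]]]]];
  last by exists l.
exists (fun a b => val (l (a, b))), (k - 4); split.
- by move=> a b; rewrite -card_cycle_prod; exact: ltn_ord.
- by move=> a b a' b' /val_inj /(bij_inj hb) [-> ->].
- move=> i j; have := hk (i, j); rewrite cycle_prod_nbr_sum //= => <-.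
  by rewrite /nbr_sum /row_pair_sum /label /=; lia.
Qed.

Lemma four_times_two_mod m : ~~ (4 %| m) -> exists t c, 4 * t = c * m + 2.
Proof.
rewrite /dvdn => hd.
have hq := divn_eq m 4; have hr : m %% 4 < 4 := ltn_pmod m (isT : 0 < 4).
move: hq hr hd; move: (m %/ 4) (m %% 4) => q [|[|[|[|r]]]] //= hq _ _.
- by exists (2 * q + 1), 2; lia.
- by exists (q + 1), 1; lia.
- by exists (2 * q + 2), 2; lia.
Qed.

(* A function on C_m with G a + G (a + 2) constant is 4-periodic, hence
   2-periodic when 4 does not divide m, so that 2 G a equals the constant. *)
Lemma constant_of_two_step m (G : 'I_m -> nat) k : ~~ (4 %| m) ->
  (forall a, G a + G (ordS (ordS a)) = k) -> forall a, G a + G a = k.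
Proof.
move=> h4 HG.
have G4 a : G (iter 4 (@ordS m) a) = G a.
  by have := HG a; have := HG (ordS (ordS a)); rewrite /=; lia.
have G4t t a : G (iter (4 * t) (@ordS m) a) = G a.
  by elim: t a => [|t IH] a //; rewrite mulnS iterD G4 IH.
have [t [c htc]] := four_times_two_mod h4.
have G2 a : G (ordS (ordS a)) = G a.
  rewrite -(G4t t a); congr G; apply: val_inj.
  by rewrite val_iter_ordS htc addnCA modnMDl -(val_iter_ordS a 2).
by move=> a; rewrite -{2}G2 HG.
Qed.

(* Core of necessity: if 4 does not divide m, every row of a magic table has
   constant pair sums, and comparing columns b + 1 and b + 3 forces n = 4. *)
Lemma magic_rows_force_four m n (L : 'I_m -> 'I_n -> nat) k : 3 <= n ->
  table_injective L -> (forall i j, nbr_sum L i j = k) -> ~~ (4 %| m) -> n = 4.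
Proof.
move=> hn hinj hsum h4.
have hm0 : 0 < m by apply: contraNT h4; rewrite -eqn0Ngt => /eqP ->.
pose a0 : 'I_m := Ordinal hm0; pose b0 : 'I_n := Ordinal (leq_trans (isT : 0 < 3) hn).
have row_half b : row_pair_sum L a0 b + row_pair_sum L a0 b = k.
  apply: (constant_of_two_step (G := row_pair_sum L ^~ b) h4) => a.
  by have := hsum (ordS a) b; rewrite /nbr_sum ordSK.
have e1 := row_half (ordS b0); have e2 := row_half (ordS (ordS (ordS b0))).
rewrite /row_pair_sum !ordSK in e1 e2.
have e : L a0 b0 = L a0 (iter 4 (@ordS n) b0) by rewrite /=; lia.
have [_ eb] := hinj _ _ _ _ e.
by apply: (cycle_four_step (a := b0)) => //; rewrite -eb.
Qed.

Lemma distance_magic_necessary m n : 3 <= m -> 3 <= n ->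
  distance_magic (cycle_prod m n) ->
  [\/ n = 4, m = 4 | m %% 4 = 0 /\ n %% 4 = 0].
Proof.
move=> hm hn /(distance_magic_table hm hn) [L [k ht]].
have [_ hinj hsum] := ht; have [_ hinjT hsumT] := magic_table_transpose ht.
have [dm|ndm] := boolP (4 %| m).
  2: by constructor 1; exact: magic_rows_force_four hn hinj hsum ndm.
have [dn|ndn] := boolP (4 %| n).
  2: by constructor 2; exact: magic_rows_force_four hm hinjT hsumT ndn.
by constructor 3; split; apply/eqP.
Qed.

Definition complemented m n (L : 'I_m -> 'I_n -> nat) : Prop :=
  forall a b, exists a' b', L a' b' + L a b = (m * n).-1 /\
    (forall x, cycle_adj x a -> cycle_adj x a') /\
    (forall y, cycle_adj y b -> cycle_adj y b').

Lemma complemented_transpose m n (L : 'I_m -> 'I_n -> nat) :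
  complemented L -> complemented (fun b a => L a b).
Proof.
move=> hc b a; have [a' [b' [e [ha hb]]]] := hc a b.
by exists b', a'; rewrite mulnC.
Qed.

Lemma balanced_of_table m n (L : 'I_m -> 'I_n -> nat) k :
  3 <= m -> 3 <= n -> ~~ odd (m * n) -> magic_table L k -> complemented L ->
  balanced_distance_magic (cycle_prod m n).
Proof.
move=> hm hn hev ht hc; have [hlt _ _] := ht.
have [l [hl hlL]] := table_labeling hm hn ht.
split; first by rewrite card_cycle_prod.
exists l; split => // w [a b] /andP [/= h1 h2].
have [a' [b' [e [ha hb]]]] := hc a b.
exists (a', b'); split; first by rewrite /direct_prod /= ha // hb.
have := hlt a b; rewrite /label !hlL card_cycle_prod /=; lia.
Qed.

Lemma cycle_prod_common_nbr m n (a : 'I_m) (b : 'I_n) v :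
  3 <= m -> 3 <= n -> m <> 4 -> n <> 4 ->
  cycle_prod m n (ordS a, ordS b) v -> cycle_prod m n (ord_pred a, ord_pred b) v ->
  v = (a, b).
Proof.
move=> hm hn hm4 hn4; case: v => c d /andP [/= hc1 hd1] /andP [/= hc2 hd2].
by rewrite (cycle_common_nbr hm hm4 hc1 hc2) (cycle_common_nbr hn hn4 hd1 hd2).
Qed.

(* Necessity of the balanced condition: the complementary partner of (a, b)
   would have to be (a, b) itself, which contradicts the parity of mn. *)
Lemma balanced_necessary m n : 3 <= m -> 3 <= n ->
  balanced_distance_magic (cycle_prod m n) -> n = 4 \/ m = 4.
Proof.
move=> hm hn [hev [l [[hb _] hbal]]].
have [->|hn4] := eqVneq n 4; first by left.
have [->|hm4] := eqVneq m 4; first by right.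
pose a : 'I_m := Ordinal (leq_trans (isT : 0 < 3) hm).
pose b : 'I_n := Ordinal (leq_trans (isT : 0 < 3) hn).
have e1 : cycle_prod m n (ordS a, ordS b) (a, b).
  by rewrite /direct_prod /= !cycle_adjE !ordSK !eqxx !orbT.
have e2 : cycle_prod m n (ord_pred a, ord_pred b) (a, b).
  by rewrite /direct_prod /= !cycle_adjE !ord_predK !eqxx.
have [v1 [f1 l1]] := hbal _ _ e1; have [v2 [f2 l2]] := hbal _ _ e2.
have ev : v1 = v2.
  by apply: (bij_inj hb); apply: ord_inj; move: l1 l2; rewrite /label; lia.
subst v2; move: l1.
rewrite (cycle_prod_common_nbr hm hn (elimN eqP hm4) (elimN eqP hn4) f1 f2).
have := ltn_ord (l (a, b)); rewrite /label => hlt hself.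
have hodd : odd #|{: 'I_m * 'I_n}|.
  by rewrite (_ : #|_| = (l (a, b)).*2.+1) ?odd_double //; lia.
by rewrite hodd in hev.
Qed.

(* The magic table of C_p x C_4: its columns are a, p + a, 4p - 1 - a and
   3p - 1 - a, so that any two columns at distance 2 are complementary. *)
Definition col4_table p (a : 'I_p) (b : 'I_4) : nat :=
  match nat_of_ord b with
  | 0 => nat_of_ord a | 1 => p + a | 2 => 4 * p - 1 - a | _ => 3 * p - 1 - a
  end.

Lemma col4_row_sum p (a : 'I_p) (j : 'I_4) :
  row_pair_sum (@col4_table p) a j = 4 * p - 1.
Proof.
have := ltn_ord a; rewrite /row_pair_sum /col4_table.
by case: j => [[|[|[|[|j]]]] hj] //=; lia.
Qed.

Lemma col4_magic p : magic_table (@col4_table p) (2 * (4 * p - 1)).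
Proof.
split.
- by move=> a [[|[|[|[|b]]]] hb]; have := ltn_ord a; rewrite /col4_table /=; lia.
- move=> a [[|[|[|[|b]]]] hb] // a' [[|[|[|[|b']]]] hb'] //;
    have := ltn_ord a; have := ltn_ord a'; rewrite /col4_table /= => ha' ha e;
    by split; apply: ord_inj => //=; lia.
- by move=> i j; rewrite /nbr_sum !col4_row_sum; lia.
Qed.

Lemma col4_complemented p : complemented (@col4_table p).
Proof.
move=> a b; exists a, (ordS (ordS b)); split; [|split] => //.
- by have := ltn_ord a; rewrite /col4_table; case: b => [[|[|[|[|b]]]] hb] //=; lia.
- by case: b => [[|[|[|[|b]]]] hb] // [[|[|[|[|y]]]] hy].
Qed.

(* The digit X < p, reflected to p - 1 - X when the selector s is 2 or 3.
   Since exactly one of s and s + 2 (mod 4) is below 2, the two choices of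
   selector give complementary digits. *)
Definition flip (p s X : nat) : nat := if s < 2 then X else p - 1 - X.

Lemma flip_lt p s X : X < p -> flip p s X < p.
Proof. by rewrite /flip; case: ifP; lia. Qed.

Lemma flip_inj p s X X' : X < p -> X' < p -> flip p s X = flip p s X' -> X = X'.
Proof. by rewrite /flip; case: ifP; lia. Qed.

Lemma flip_pair p s X : s < 4 -> X < p -> flip p s X + flip p ((s + 2) %% 4) X = p - 1.
Proof. by rewrite /flip; case: s => [|[|[|[|s]]]] //=; lia. Qed.

(* A 4 x 4 tile of the labels 0..15 in which every four cells {r, r + 2} x
   {s, s + 2} (indices mod 4) sum to 30. *)
Definition tile (r s : nat) : nat :=
  if s < 2 then 4 * s + r else 15 - (4 * (s - 2) + r).

Lemma tile_lt r s : r < 4 -> s < 4 -> tile r s < 16.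
Proof. by rewrite /tile; case: ifP; lia. Qed.

Lemma tile_inj r s r' s' : r < 4 -> s < 4 -> r' < 4 -> s' < 4 ->
  tile r s = tile r' s' -> r = r' /\ s = s'.
Proof. by rewrite /tile; case: ifP; case: ifP; lia. Qed.

Lemma tile_sum r s : r < 4 -> s < 4 ->
  tile r s + tile r ((s + 2) %% 4) + tile ((r + 2) %% 4) s
  + tile ((r + 2) %% 4) ((s + 2) %% 4) = 30.
Proof. by case: r => [|[|[|[|r]]]] //; case: s => [|[|[|[|s]]]]. Qed.

Lemma digits_inj d x y x' y' : y < d -> y' < d ->
  x * d + y = x' * d + y' -> x = x' /\ y = y'.
Proof.
move=> hy hy' e.
have ey : y = y' by have := congr1 (modn^~ d) e; rewrite !modnMDl !modn_small.
subst y'; split => //.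
by move/eqP: e; rewrite eqn_add2r eqn_mul2r => /orP [/eqP|/eqP] //; lia.
Qed.

Lemma ordSS_mod4 m (x : 'I_m) : 4 %| m -> ordS (ordS x) %% 4 = (x %% 4 + 2) %% 4.
Proof.
move=> h4; change (nat_of_ord (ordS (ordS x))) with (val (iter 2 (@ordS m) x)).
by rewrite val_iter_ordS modn_dvdm // modnDml.
Qed.

Lemma div4_lt m (a : 'I_m) : 4 %| m -> a %/ 4 < m %/ 4.
Proof. by move=> h; rewrite ltn_divLR // divnK. Qed.

(* For 4 | m and 4 | n write a = 4A + r and b = 4B + s.  The label of (a, b)
   has low base-16 digit tile r s, and its high part combines the block
   coordinate A (reflected according to s) and B (reflected according to r). *)
Definition block_table m n (a : 'I_m) (b : 'I_n) : nat :=
  (n %/ 4 * flip (m %/ 4) (b %% 4) (a %/ 4) + flip (n %/ 4) (a %% 4) (b %/ 4)) * 16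
  + tile (a %% 4) (b %% 4).

Definition block_const m n : nat :=
  ((n %/ 4 * (m %/ 4 - 1)) * 2 + (n %/ 4 - 1) * 2) * 16 + 30.

Lemma block_table_lt m n (a : 'I_m) (b : 'I_n) :
  4 %| m -> 4 %| n -> block_table a b < m * n.
Proof.
move=> hm hn; rewrite /block_table.
have hA := flip_lt (b %% 4) (div4_lt a hm).
have hB := flip_lt (a %% 4) (div4_lt b hn).
have l4 x : x %% 4 < 4 by exact: ltn_pmod.
have hT := tile_lt (l4 a) (l4 b).
have em := esym (divnK hm); have en := esym (divnK hn).
move: hA hB hT em en; move: (flip _ _ (a %/ 4)) (flip _ _ (b %/ 4)) (tile _ _) => A B C.
by move: (m %/ 4) (n %/ 4) => p q; nia.
Qed.

Lemma block_table_inj m n : 4 %| m -> 4 %| n -> table_injective (@block_table m n).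
Proof.
move=> hm hn a b a' b'; rewrite /block_table => e.
have l4 x : x %% 4 < 4 by exact: ltn_pmod.
have [e1 e2] := digits_inj (tile_lt (l4 a) (l4 b)) (tile_lt (l4 a') (l4 b')) e.
have [r1 s1] := tile_inj (l4 a) (l4 b) (l4 a') (l4 b') e2.
move: e1; rewrite ![n %/ 4 * _]mulnC => e1.
have [e3 e4] := digits_inj (flip_lt _ (div4_lt b hn)) (flip_lt _ (div4_lt b' hn)) e1.
rewrite s1 in e3; rewrite r1 in e4.
have d1 := flip_inj (div4_lt a hm) (div4_lt a' hm) e3.
have d2 := flip_inj (div4_lt b hn) (div4_lt b' hn) e4.
split; apply: ord_inj.
- by rewrite (divn_eq a 4) (divn_eq a' 4) d1 r1.
- by rewrite (divn_eq b 4) (divn_eq b' 4) d2 s1.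
Qed.

(* The four neighbours of (i, j) are {u, u + 2} x {v, v + 2}: the tile digits
   sum to 30 and each block digit meets its reflection. *)
Lemma block_table_sum m n (i : 'I_m) (j : 'I_n) : 4 %| m -> 4 %| n ->
  nbr_sum (@block_table m n) i j = block_const m n.
Proof.
move=> hm hn; rewrite /nbr_sum /row_pair_sum.
have -> : ordS i = ordS (ordS (ord_pred i)) by rewrite ord_predK.
have -> : ordS j = ordS (ordS (ord_pred j)) by rewrite ord_predK.
move: (ord_pred i) (ord_pred j) => u v.
set u2 := ordS (ordS u); set v2 := ordS (ordS v).
have l4 x : x %% 4 < 4 by exact: ltn_pmod.
have hu : u2 %% 4 = (u %% 4 + 2) %% 4 := ordSS_mod4 u hm.
have hv : v2 %% 4 = (v %% 4 + 2) %% 4 := ordSS_mod4 v hn.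
have F1 := flip_pair (l4 v) (div4_lt u hm); rewrite -hv in F1.
have F2 := flip_pair (l4 v) (div4_lt u2 hm); rewrite -hv in F2.
have F3 := flip_pair (l4 u) (div4_lt v hn); rewrite -hu in F3.
have F4 := flip_pair (l4 u) (div4_lt v2 hn); rewrite -hu in F4.
have F5 := tile_sum (l4 u) (l4 v); rewrite -hu -hv in F5.
rewrite /block_table /block_const; move: F1 F2 F3 F4 F5.
move: (flip _ (v %% 4) (u %/ 4)) (flip _ (v2 %% 4) (u %/ 4)) => A1 A2.
move: (flip _ (v %% 4) (u2 %/ 4)) (flip _ (v2 %% 4) (u2 %/ 4)) => A3 A4.
move: (flip _ (u %% 4) (v %/ 4)) (flip _ (u2 %% 4) (v %/ 4)) => B1 B2.
move: (flip _ (u %% 4) (v2 %/ 4)) (flip _ (u2 %% 4) (v2 %/ 4)) => B3 B4.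
move: (tile _ _) (tile _ _) (tile _ _) (tile _ _) (m %/ 4) (n %/ 4) => T1 T2 T3 T4 p q.
by nia.
Qed.

Lemma block_magic m n : 4 %| m -> 4 %| n ->
  magic_table (@block_table m n) (block_const m n).
Proof.
move=> hm hn; split => [a b | | i j].
- exact: block_table_lt.
- exact: block_table_inj.
- exact: block_table_sum.
Qed.

Lemma distance_magic_sufficient m n : 3 <= m -> 3 <= n ->
  [\/ n = 4, m = 4 | m %% 4 = 0 /\ n %% 4 = 0] -> distance_magic (cycle_prod m n).
Proof.
move=> hm hn h; apply/(distance_magic_table hm hn).
case: h => [->|->|[/eqP dm /eqP dn]].
- by exists (@col4_table m), (2 * (4 * m - 1)); exact: col4_magic.
- exists (fun b a => @col4_table n a b), (2 * (4 * n - 1)).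
  exact/magic_table_transpose/col4_magic.
- by exists (@block_table m n), (block_const m n); exact: block_magic.
Qed.

Lemma balanced_sufficient m n : 3 <= m -> 3 <= n ->
  n = 4 \/ m = 4 -> balanced_distance_magic (cycle_prod m n).
Proof.
move=> hm hn [hn4|hm4]; [subst n | subst m].
- apply: (balanced_of_table hm hn _ (col4_magic m) (@col4_complemented m)).
  by rewrite oddM andbF.
- apply: (balanced_of_table hm hn _ (magic_table_transpose (col4_magic n))
                             (complemented_transpose (@col4_complemented n))).
  by rewrite oddM.
Qed.

Theorem mainTheorem11 (m n : nat) (hm : 3 <= m) (hn : 3 <= n) :
  (distance_magic (direct_prod (@cycle_adj m) (@cycle_adj n)) <->
     [\/ n = 4, m = 4 | (m %% 4 = 0 /\ n %% 4 = 0)]) /\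
  (balanced_distance_magic (direct_prod (@cycle_adj m) (@cycle_adj n)) <->
     n = 4 \/ m = 4).
Proof.
split; split.
- exact: distance_magic_necessary.
- exact: distance_magic_sufficient.
- exact: balanced_necessary.
- exact: balanced_sufficient.
Qed.
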